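(* Let $\Sigma$ be an alphabet with $|\Sigma|\geq 3$ and $n\geq 1$. If $g\colon\mathcal{T}(\Sigma)^n\to\mathcal{T}(\Sigma)$ is WCP and $g(\Sigma^n)\subseteq\Sigma$, then the restriction of $g$ to $\Sigma^n$ is either a constant function or a projection $\pi_i^n$ (for some $i\in\{1,\ldots,n\}$, $\pi_i^n(a_1,\ldots,a_n)=a_i$).
   Context: Let $\Sigma$ be an alphabet not containing $0,1$. A binary tree over $\Sigma$ is a finite set $t \subseteq \{0,1\}^*\Sigma$ such that for any $ua, vb \in t$ with $ua \neq vb$, $u$ is not a prefix of $v$ and $v$ is not a prefix of $u$; $\mathcal{T}(\Sigma)$ is the set of such trees, $\mathbf 0=\emptyset$, each letter $a$ is identified with $\{a\}$, and $t\star t' = 0.t\cup 1.t'$. Every map $h\colon\Sigma\to\mathcal{T}(\Sigma)$ extends uniquely to an endomorphism of $\langle\mathcal{T}(\Sigma),\star\rangle$, still denoted $h$. A function $g\colon\mathcal{T}(\Sigma)^n\to\mathcal{T}(\Sigma)$ is WCP if for every idempotent mapping $h\colon\Sigma\to\Sigma$ and all $\vec u,\vec v\in\Sigma^n$, $h(\vec u)=h(\vec v)$ implies $h(g(\vec u))=h(g(\vec v))$, where $h(\langle u_1,\ldots,u_n\rangle)=\langle h(u_1),\ldots,h(u_n)\rangle$. *)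

From HB Require Import structures.
From mathcomp Require Import all_boot.
From mathcomp Require Import finmap.
Set Implicit Arguments. Unset Strict Implicit. Unset Printing Implicit Defensive.
Local Open Scope fset_scope.

(* A word of {0,1}^* Sigma is a pair (u, a) with u : seq bool (false = 0,
   true = 1) and a : Sigma. *)
Definition is_tree (S : finType) (t : {fset seq bool * S}) : bool :=
  [forall x : t, forall y : t,
     (val x != val y) ==>
       (~~ prefix (val x).1 (val y).1 && ~~ prefix (val y).1 (val x).1)].

(* T(Sigma): binary trees over Sigma *)
Record tree (S : finType) := Tree { tval :> {fset seq bool * S};
                                    tvalP : is_tree tval }.

Lemma letter_is_tree (S : finType) (a : S) : is_tree [fset ([::], a)].
Proof.
apply/forallP => x; apply/forallP => y; apply/implyP => Hxy.
have := valP x; have := valP y; rewrite !inE => /eqP Ey /eqP Ex.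
by move: Hxy; rewrite Ex Ey eqxx.
Qed.

Definition letter (S : finType) (a : S) : tree S := Tree (letter_is_tree a).

(* Extension of h : Sigma -> Sigma (letter-valued) to an endomorphism of
   <T(Sigma), *>: it relabels each leaf u a into u h(a). *)
Definition hext (S : finType) (h : S -> S) (t : {fset seq bool * S})
  : {fset seq bool * S} :=
  [fset (p.1, h p.2) | p in t].

Definition idempotent_map (S : finType) (h : S -> S) : Prop :=
  forall x, h (h x) = h x.

Definition WCP (S : finType) (n : nat) (g : n.-tuple (tree S) -> tree S) : Prop :=
  forall h : S -> S, idempotent_map h ->
  forall u v : n.-tuple S, map_tuple h u = map_tuple h v ->
    hext h (g (map_tuple (@letter S) u)) = hext h (g (map_tuple (@letter S) v)).

From HB Require Import structures.
From mathcomp Require Import all_boot.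
From mathcomp Require Import finmap.
Set Implicit Arguments. Unset Strict Implicit. Unset Printing Implicit Defensive.

(* On letters, g induces f : S^n -> S with h (f u) = h (f v) whenever h u = h v
   for an idempotent h. If some f u is not a letter of u, collapsing the other
   letters shows that f is constant. Otherwise f is conservative, hence commutes
   with idempotent maps. Then whether f returns a on the tuple that is a on A and
   b elsewhere does not depend on the letters a != b, and evaluating f on tuples
   with three letters shows that the sets A for which it does form an ultrafilter
   on the coordinates. This ultrafilter is principal, generated by some {i}, and
   f is the i-th projection. *)

Lemma exists_other (S : finType) (a b : S) : 2 < #|S| ->
  exists c, (c != a) && (c != b).
Proof.
move=> S3; have : 0 < #|~: [set a; b]|.
  rewrite lt0n; apply/eqP => no_other.
  by move: S3; rewrite -(cardsC [set a; b]) no_other addn0 cards2; case: (a != b).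
by case/card_gt0P => c; rewrite !inE negb_or; exists c.
Qed.

Definition collapse (S : eqType) (a b : S) (w : S) : S := if w == a then a else b.

Definition relabel (S : eqType) (a b : S) (w : S) : S := if w == a then b else w.

Lemma collapse_idem (S : finType) (a b : S) : idempotent_map (collapse a b).
Proof.
by move=> w; rewrite /collapse; case: (eqVneq w a); rewrite ?eqxx // => _; case: eqVneq.
Qed.

Lemma relabel_idem (S : finType) (a b : S) : idempotent_map (relabel a b).
Proof.
by move=> w; rewrite /relabel; case: (eqVneq w a) => [_|/negbTE -> //]; case: eqVneq.
Qed.

Lemma map_tuple_idem (S : finType) n (h : S -> S) (u : n.-tuple S) :
  idempotent_map h -> map_tuple h (map_tuple h u) = map_tuple h u.
Proof. by move=> h_idem; apply: eq_from_tnth => i; rewrite !tnth_map h_idem. Qed.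

Definition wcp_letters (S : finType) n (f : n.-tuple S -> S) : Prop :=
  forall h : S -> S, idempotent_map h ->
  forall u v : n.-tuple S, map_tuple h u = map_tuple h v -> h (f u) = h (f v).

Lemma hext_letter (S : finType) (h : S -> S) (a : S) :
  hext h (letter a) = letter (h a) :> {fset _}.
Proof.
apply/fsetP => p; rewrite inE; apply/imfsetP/eqP => [[q]|->].
  by rewrite inE => /eqP -> ->.
by exists ([::], a); rewrite ?inE.
Qed.

Lemma wcp_letters_of_WCP (S : finType) n (g : n.-tuple (tree S) -> tree S)
    (f : n.-tuple S -> S) :
  WCP g -> (forall u, g (map_tuple (@letter S) u) = letter (f u)) -> wcp_letters f.
Proof.
move=> g_wcp gf h h_idem u v huv; have := g_wcp h h_idem u v huv.
by rewrite !gf !hext_letter => /fset1_inj [].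
Qed.

Section LetterFunction.
Variables (S : finType) (n : nat) (f : n.-tuple S -> S).
Hypothesis card_S : 2 < #|S|.
Hypothesis f_wcp : wcp_letters f.

Lemma constant_of_not_conservative (u : n.-tuple S) :
  f u \notin (u : seq S) -> forall v, f v = f u.
Proof.
set c := f u => c_notin_u.
(* Collapsing every letter but c onto e identifies u with v and fixes c. *)
have f_avoiding_c (v : n.-tuple S) : c \notin (v : seq S) -> f v = c.
  move=> c_notin_v; have [e /andP [e_c _]] := exists_other c c card_S.
  have collapse_uv : map_tuple (collapse c e) u = map_tuple (collapse c e) v.
    apply: eq_from_tnth => i; rewrite !tnth_map /collapse.
    by rewrite (negbTE (memPn c_notin_u _ (mem_tnth _ _)))
               (negbTE (memPn c_notin_v _ (mem_tnth _ _))).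
  have := f_wcp (collapse_idem c e) collapse_uv; rewrite /collapse eqxx.
  by case: eqVneq => // _ ce; move: e_c; rewrite ce eqxx.
have f_in_pair (v : n.-tuple S) x : x != c -> f v = c \/ f v = x.
  move=> x_c; set v' := map_tuple (relabel c x) v.
  have c_notin_v' : c \notin (v' : seq S).
    apply/mapP => -[w _]; rewrite /relabel; case: eqVneq => [_ cx|wc cw].
      by move: x_c; rewrite cx eqxx.
    by move: wc; rewrite cw eqxx.
  have := f_wcp (relabel_idem c x) (esym (map_tuple_idem v (relabel_idem c x))).
  rewrite (f_avoiding_c _ c_notin_v') /relabel eqxx.
  by case: eqVneq => [|_ ->]; [left | right].
move=> v; have [x /andP [x_c _]] := exists_other c c card_S.
have [y /andP [y_c y_x]] := exists_other c x card_S.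
case: (f_in_pair v x x_c) => // fx; case: (f_in_pair v y y_c) => // fy.
by move: y_x; rewrite -fx -fy eqxx.
Qed.

Section Conservative.
Hypothesis f_conservative : forall u : n.-tuple S, f u \in (u : seq S).

Lemma f_map_idem (h : S -> S) (u : n.-tuple S) :
  idempotent_map h -> f (map_tuple h u) = h (f u).
Proof.
move=> h_idem; have := f_wcp h_idem (esym (map_tuple_idem u h_idem)).
by case/mapP: (f_conservative (map_tuple h u)) => w _ ->; rewrite h_idem => ->.
Qed.

Definition char_tuple (a b : S) (A : {set 'I_n}) : n.-tuple S :=
  [tuple if i \in A then a else b | i < n].

Definition decisive (a b : S) (A : {set 'I_n}) : bool := f (char_tuple a b A) == a.

Lemma char_tuple_preimage (a b : S) (A : {set 'I_n}) :
  a != b -> [set i | tnth (char_tuple a b A) i == a] = A.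
Proof.
move=> ab; apply/setP => i; rewrite inE tnth_mktuple.
by case: (i \in A); rewrite ?eqxx // eq_sym (negbTE ab).
Qed.

Lemma f_char_tuple (a b : S) (A : {set 'I_n}) :
  (f (char_tuple a b A) == a) || (f (char_tuple a b A) == b).
Proof.
case/tnthP: (f_conservative (char_tuple a b A)) => i ->.
by rewrite tnth_mktuple; case: (i \in A); rewrite eqxx ?orbT.
Qed.

Lemma eq_f_decisive (a b : S) (u : n.-tuple S) :
  a != b -> (f u == a) = decisive a b [set i | tnth u i == a].
Proof.
move=> ab; rewrite /decisive.
have -> : char_tuple a b [set i | tnth u i == a] = map_tuple (collapse a b) u.
  by apply: eq_from_tnth => i; rewrite tnth_mktuple tnth_map inE.
rewrite f_map_idem; last exact: collapse_idem.
by rewrite /collapse; case: eqVneq => _; rewrite ?eqxx // eq_sym (negbTE ab).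
Qed.

Lemma decisiveC (a b : S) (A : {set 'I_n}) :
  a != b -> decisive b a (~: A) = ~~ decisive a b A.
Proof.
move=> ab; rewrite /decisive.
have -> : char_tuple b a (~: A) = char_tuple a b A.
  by apply: eq_from_tnth => i; rewrite !tnth_mktuple inE; case: (i \in A).
case/orP: (f_char_tuple a b A) => /eqP ->.
  by rewrite eqxx (negbTE ab).
by rewrite eqxx eq_sym ab.
Qed.

Lemma decisive_snd (a b b' : S) (A : {set 'I_n}) :
  a != b -> a != b' -> decisive a b' A = decisive a b A.
Proof.
by move=> ab ab'; rewrite {2}/decisive (eq_f_decisive _ ab') char_tuple_preimage.
Qed.

Lemma decisive_fst (a a' b : S) (A : {set 'I_n}) :
  a != b -> a' != b -> decisive a' b A = decisive a b A.
Proof.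
move=> ab a'b; rewrite -[LHS]negbK -[RHS]negbK -(decisiveC _ a'b) -(decisiveC _ ab).
by rewrite (@decisive_snd b a a') // eq_sym.
Qed.

Lemma decisive_indep (a b a' b' : S) (A : {set 'I_n}) :
  a != b -> a' != b' -> decisive a' b' A = decisive a b A.
Proof.
move=> ab a'b'; have [e /andP [eb eb']] := exists_other b b' card_S.
by rewrite -(decisive_fst _ a'b' eb') (decisive_snd _ eb eb') (decisive_fst _ ab eb).
Qed.

Lemma decisive_setT (a b : S) : decisive a b setT.
Proof.
rewrite /decisive; case/tnthP: (f_conservative (char_tuple a b setT)) => i ->.
by rewrite tnth_mktuple in_setT.
Qed.

Section Ultrafilter.
Variables x y : S.
Hypothesis xy : x != y.

Let yx : y != x. Proof. by rewrite eq_sym. Qed.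

Lemma decisive_setC (A : {set 'I_n}) : decisive x y (~: A) = ~~ decisive x y A.
Proof. by rewrite (decisive_indep _ yx xy) decisiveC. Qed.

Lemma decisive_partition (A B : {set 'I_n}) : [disjoint A & B] ->
  decisive x y A + decisive x y B + decisive x y (~: (A :|: B)) = 1.
Proof.
move=> dAB; have [z /andP [zx zy]] := exists_other x y card_S.
have xz : x != z by rewrite eq_sym.
have yz : y != z by rewrite eq_sym.
have neqF := (negbTE xy, negbTE yx, negbTE xz, negbTE zx, negbTE yz, negbTE zy).
pose T := [tuple if i \in A then x else if i \in B then y else z | i < n].
have -> : decisive x y A = (f T == x).
  rewrite (eq_f_decisive _ xy); congr decisive; apply/setP => i.
  by rewrite !inE tnth_mktuple; case: (i \in A); case: (i \in B); rewrite ?eqxx ?neqF.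
have -> : decisive x y B = (f T == y).
  rewrite (decisive_indep _ yx xy) (eq_f_decisive _ yx); congr decisive; apply/setP => i.
  rewrite !inE tnth_mktuple; case: (boolP (i \in A)) => iA.
    by rewrite (disjointFr dAB iA) neqF.
  by case: (i \in B); rewrite ?eqxx ?neqF.
have -> : decisive x y (~: (A :|: B)) = (f T == z).
  rewrite (decisive_indep _ zx xy) (eq_f_decisive _ zx); congr decisive; apply/setP => i.
  by rewrite !inE tnth_mktuple; case: (i \in A); case: (i \in B); rewrite ?eqxx ?neqF.
case/tnthP: (f_conservative T) => i ->; rewrite tnth_mktuple.
by case: (i \in A); case: (i \in B); rewrite ?eqxx ?neqF.
Qed.

Lemma decisive_setI (A B : {set 'I_n}) :
  decisive x y A -> decisive x y B -> decisive x y (A :&: B).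
Proof.
move=> dA dB.
have dAB : [disjoint A :&: B & A :\: B].
  by rewrite -setI_eq0; apply/eqP/setP => i; rewrite !inE; case: (i \in B); rewrite ?andbF.
have dBA : [disjoint A :\: B & B].
  by rewrite -setI_eq0; apply/eqP/setP => i; rewrite !inE; case: (i \in B); rewrite ?andbF.
have := decisive_partition dAB; rewrite setID decisive_setC dA addn0.
have := decisive_partition dBA; rewrite dB.
by case: (decisive x y (A :\: B)) (decisive x y (A :&: B)) => [] [].
Qed.

Lemma decisive_principal : exists i, forall A, decisive x y A = (i \in A).
Proof.
set M := \bigcap_(A | decisive x y A) A.
have dM : decisive x y M.
  by apply: (big_ind (decisive x y)) => //; [apply: decisive_setT | apply: decisive_setI].
have [i iM] : exists i, i \in M.
  apply/set0Pn/eqP => M0; move: dM; rewrite M0 -setCT decisive_setC.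
  by rewrite decisive_setT.
exists i => A; apply/idP/idP => [dA | iA]; first by move/bigcapP: iM; apply.
apply/negPn/negP; rewrite -decisive_setC => /(bigcapP iM).
by rewrite inE iA.
Qed.

End Ultrafilter.

Lemma conservative_projection : exists i, forall u, f u = tnth u i.
Proof.
have /card_gt0P [a _] : 0 < #|S| by apply: leq_trans card_S.
have [b /andP [ba _]] := exists_other a a card_S.
have [i decisive_i] := decisive_principal ba.
exists i => u; have [d /andP [df _]] := exists_other (f u) (f u) card_S.
have fd : f u != d by rewrite eq_sym.
move: (eqxx (f u)); rewrite (eq_f_decisive _ fd) (decisive_indep _ ba fd).
by rewrite decisive_i inE => /eqP.
Qed.

End Conservative.
End LetterFunction.

Theorem mainTheorem9 (S : finType) (n : nat) (g : n.-tuple (tree S) -> tree S) :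
  2 < #|S| -> 0 < n ->
  WCP g ->
  (forall u : n.-tuple S, exists a : S, g (map_tuple (@letter S) u) = letter a) ->
  (exists c : S, forall u : n.-tuple S, g (map_tuple (@letter S) u) = letter c) \/
  (exists i : 'I_n, forall u : n.-tuple S,
      g (map_tuple (@letter S) u) = letter (tnth u i)).
Proof.
move=> card_S _ g_wcp g_letters.
have [f gf] := fin_all_exists g_letters.
have f_wcp := wcp_letters_of_WCP g_wcp gf.
case: (boolP [forall u, f u \in (u : seq S)]) => [/forallP f_cons | /forallPn [u f_u]].
  right; have [i f_proj] := conservative_projection card_S f_wcp f_cons.
  by exists i => u; rewrite gf f_proj.
left; exists (f u) => v.
by rewrite gf (constant_of_not_conservative card_S f_wcp f_u).
Qed.
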